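(* Let $\mathcal L$ be a finite distributive lattice and $i$ an integer, and let $\mathcal L_{i,i}=\{p\in\mathcal L:\operatorname{rank}p=i\}$. If $|\mathcal L_{i,i}|>1$, then the ideal $H_{\mathcal L_{i,i}}$ has no linear resolution.
   Context: A finite distributive lattice is graded, with rank function $\operatorname{rank}$ ($0$ at the minimum, increasing by $1$ along cover relations). Let $P$ be the set of join-irreducible elements of $\mathcal L$ (elements with exactly one lower neighbor); for $p\in\mathcal L$ put $\ell(p)=\{q\in P:q\le p\}$. Let $K$ be a field, $S=K[x_p,y_p:p\in P]$ with all variables of degree 1, $u_q=\prod_{p\in\ell(q)}x_p\prod_{p\in P\setminus\ell(q)}y_p$, and for $\mathcal S\subseteq\mathcal L$ let $H_{\mathcal S}=(u_q:q\in\mathcal S)$. A graded ideal has a linear resolution if all minimal generators have a common degree $d$ and the $i$-th module of its graded minimal free resolution is generated in degree $d+i$. *)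

From HB Require Import structures.
From mathcomp Require Import all_boot all_order all_algebra.
From mathcomp Require Import mpoly.
Set Implicit Arguments. Unset Strict Implicit. Unset Printing Implicit Defensive.
Import Order.TTheory GRing.Theory.
Local Open Scope order_scope.

Section Lattice.
Context {disp : Order.disp_t} {L : finTBDistrLatticeType disp}.

Definition covers (x y : L) : bool :=
  (x < y) && [forall z : L, ~~ ((x < z) && (z < y))].

Definition is_chain (C : {set L}) : bool :=
  [forall x in C, forall y in C, (x <= y) || (y <= x)].

(* rank p = length of a longest chain from the minimum \bot to p
   (in a graded poset this is the rank function: 0 at \bot, +1 along covers) *)
Definition rank (p : L) : nat :=
  (\max_(C : {set L} | is_chain C && (C \subset [set z : L | (\bot <= z) && (z <= p)]))
      #|C|).-1.

Definition jirr : {set L} := [set p : L | #|[set q : L | covers q p]| == 1%N].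

Definition ell (p : L) : {set L} := [set q in jirr | q <= p].

Definition rank_level (i : int) : {set L} := [set p : L | (Posz (rank p)) == i].

End Lattice.

Section Ring.
Context {disp : Order.disp_t} (L : finTBDistrLatticeType disp).

Definition PT : finType := {p : L | p \in (jirr : {set L})}.

(* variables are indexed by PT + PT : inl p ~ x_p, inr p ~ y_p *)
Definition nvars : nat := #|{: (PT + PT)%type}|.

Definition Sring (K : fieldType) := {mpoly K[nvars]}.

Definition xvar (K : fieldType) (p : PT) : {mpoly K[nvars]} :=
  'X_(enum_rank (inl p : (PT + PT)%type)).
Definition yvar (K : fieldType) (p : PT) : {mpoly K[nvars]} :=
  'X_(enum_rank (inr p : (PT + PT)%type)).

Definition u_mon (K : fieldType) (q : L) : {mpoly K[nvars]} :=
  (\prod_(p : PT | val p \in ell q) xvar K p *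
   \prod_(p : PT | val p \notin ell q) yvar K p)%R.

Definition H_ideal (K : fieldType) (Sset : {set L}) : {mpoly K[nvars]} -> Prop :=
  fun f => exists c : L -> {mpoly K[nvars]}, f = (\sum_(q in Sset) c q * u_mon K q)%R.

End Ring.

(* homogeneous of degree d (the zero polynomial is homogeneous of every degree) *)
Definition homog_deg {n : nat} {K : fieldType} (d : nat) (f : {mpoly K[n]}) : bool :=
  all (fun m : 'X_{1..n} => mdeg m == d) (msupp f).

(* A graded ideal I of S = K[X_0..X_{n-1}] has a linear resolution:
   there is a graded free resolution
        ... -> F_2 --A 1--> F_1 --A 0--> F_0 --g--> I -> 0
   with F_i = S(-d-i)^(b i) (basis of F_i in degree d+i, maps of degree 0):
   elements of F_i are row vectors of length b i, F_{i+1} -> F_i is v |-> v *m A i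
   with all entries of A i homogeneous linear forms (degree 1), and F_0 -> I is
   v |-> v *m g with all entries of g homogeneous of degree d. Such a resolution
   is automatically minimal (all maps have entries in the maximal ideal), so it is
   the graded minimal free resolution; conversely a linear minimal resolution is one. *)
Definition has_linear_resolution {n : nat} {K : fieldType}
    (I : {mpoly K[n]} -> Prop) : Prop :=
  exists (d : nat) (b : nat -> nat) (g : 'cV[{mpoly K[n]}]_(b 0%N))
         (A : forall i : nat, 'M[{mpoly K[n]}]_(b i.+1, b i)),
    [/\ (forall j, homog_deg d (g j ord0)),
        (forall i j k, homog_deg 1 (A i j k)),
        (forall f, I f <-> exists v : 'rV_(b 0%N), f = (v *m g) ord0 ord0),
        (forall v : 'rV_(b 0%N), v *m g = 0 <-> exists w, v = w *m A 0%N)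
      & (forall i (v : 'rV_(b i.+1)), v *m A i = 0 <-> exists w, v = w *m A i.+1)]%R.

Arguments H_ideal {disp} L K Sset _.
Arguments u_mon {disp} L K q.

From HB Require Import structures.
From mathcomp Require Import all_boot all_order all_algebra.
From mathcomp Require Import mpoly zify.

(* If p != q have the same rank, then u_q divides no product x * u_p with x a
   variable or 1: that would make ell p and ell q comparable, hence p and q
   comparable, hence equal.  Now let g_1, ..., g_b generate H, with linear
   first syzygies.  Comparing degrees with u_p shows that the g_j have degree
   |P|, so g_j = sum_q c_jq u_q with c_jq in K.  For a linear syzygy a, the
   linear form pi(a) = sum_j c_jp a_j has as coefficient at x the coefficient
   of sum_j a_j g_j = 0 at x * u_p; so pi kills the linear syzygies, hence all
   syzygies.  Yet if alpha g = u_p and beta g = u_q, then pi of the Koszul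
   syzygy u_q alpha - u_p beta has coefficient 1 at u_q. *)

Set Implicit Arguments. Unset Strict Implicit. Unset Printing Implicit Defensive.
Import Order.TTheory GRing.Theory.

Section LatticeFacts.
Context {disp : Order.disp_t} {L : finTBDistrLatticeType disp}.
Implicit Types c p x y z : L.
Local Open Scope order_scope.

Lemma rank_lt x y : x < y -> (rank x < rank y)%N.
Proof.
move=> xy; rewrite /rank.
set chain_below := fun p (C : {set L}) =>
  is_chain C && (C \subset [set z : L | (\bot <= z) && (z <= p)]).
have bot_chain_below : chain_below x [set \bot].
  apply/andP; split; last by apply/subsetP=> z /set1P->; rewrite inE lexx le0x.
  apply/forallP=> s; apply/implyP=> /set1P->.
  by apply/forallP=> t; apply/implyP=> /set1P->; rewrite lexx.
have extend C : chain_below x C -> chain_below y (y |: C).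
  case/andP=> chC /subsetP subC.
  have Cy t : t \in C -> t <= y.
    by move=> /subC; rewrite inE => /andP[_ /le_trans]; apply; apply: ltW.
  apply/andP; split; last first.
    by apply/subsetP=> t /setU1P[->|/Cy]; rewrite inE le0x ?lexx.
  apply/forallP=> s; apply/implyP=> /setU1P sC; apply/forallP=> t; apply/implyP=> /setU1P tC.
  case: sC tC => [->|sC] [->|tC]; rewrite ?lexx ?Cy ?orbT //.
  by move/forallP: chC => /(_ s); rewrite sC => /forallP/(_ t); rewrite tC.
have notin C : chain_below x C -> y \notin C.
  case/andP=> _ /subsetP subC; apply/negP=> /subC.
  by rewrite inE le0x /= lt_geF.
have mx_pos : (0 < \max_(C | chain_below x C) #|C|)%N.
  by apply: leq_trans (leq_bigmax_cond _ bot_chain_below); rewrite cards1.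
have mx_lt : (\max_(C | chain_below x C) #|C| <= (\max_(C | chain_below y C) #|C|).-1)%N.
  apply/bigmax_leqP => C xC.
  have := leq_bigmax_cond (F := fun C : {set L} => #|C|) _ (extend C xC).
  by rewrite cardsU1 notin //; lia.
by move: mx_pos mx_lt; rewrite /chain_below /=; lia.
Qed.

Lemma eq_of_le_rank x y : x <= y -> rank x = rank y -> x = y.
Proof. by rewrite le_eqVlt => /predU1P[//|/rank_lt]; lia. Qed.

Lemma covers_lt c p : covers c p -> c < p.
Proof. by case/andP. Qed.

Lemma covers_between c p z : covers c p -> c <= z -> z <= p -> (z == c) || (z == p).
Proof.
case/andP=> _ /forallP/(_ z); rewrite !lt_neqAle => nz cz zp.
by move: nz; rewrite cz zp !andbT negb_and !negbK eq_sym.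
Qed.

Lemma covers_join c1 c2 p :
  covers c1 p -> covers c2 p -> c1 != c2 -> c1 `|` c2 = p.
Proof.
move=> c1p c2p c12.
have c12p : c1 `|` c2 <= p by rewrite leUx !ltW ?covers_lt.
have /predU1P[j1|/eqP//] := covers_between c1p (leUl c1 c2) c12p.
have c21 : c2 <= c1 by rewrite -j1 leUr.
have /predU1P[c1E|/eqP c1E] := covers_between c2p c21 (ltW (covers_lt c1p)).
  by rewrite c1E eqxx in c12.
by move: (covers_lt c1p); rewrite c1E ltxx.
Qed.

Lemma exists_cover x p : x < p -> exists2 c, x <= c & covers c p.
Proof.
move=> xp; pose between := [pred z | (x <= z) && (z < p)].
have [|c /andP[xc cp] cmax] := @arg_maxnP _ x between rank; first by rewrite /= lexx.
exists c => //; apply/andP; split=> //; apply/forallP=> z; apply/negP=> /andP[cz zp].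
have := cmax z; rewrite /= (le_trans xc (ltW cz)) zp => /(_ isT).
by rewrite leqNgt rank_lt.
Qed.

Lemma ell_le x y : x <= y -> ell x \subset ell y.
Proof. by move=> xy; apply/subsetP=> r; rewrite !inE => /andP[-> /le_trans->]. Qed.

Lemma ell_subset_le x y : ell x \subset ell y -> x <= y.
Proof.
have [k] : exists k, (rank x < k)%N by exists (rank x).+1.
elim: k x => [//|k IH] x xk sub.
have [xJ|xNJ] := boolP (x \in (jirr : {set L})).
  have /(subsetP sub) : x \in ell x by rewrite inE xJ lexx.
  by rewrite inE => /andP[].
have [->|xn0] := eqVneq x \bot; first exact: le0x.
have [c1 _ c1x] : exists2 c, \bot <= c & covers c x by apply: exists_cover; rewrite lt0x.
have : c1 \in [set z | covers z x] by rewrite inE.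
move: xNJ; rewrite inE (cardsD1 c1) => /[swap] ->; rewrite add1n eqSS -lt0n.
case/card_gt0P=> c2; rewrite !inE => /andP[c21 c2x].
have le_y c : covers c x -> c <= y.
  move=> cx; have cltx := covers_lt cx.
  exact: IH (leq_trans (rank_lt cltx) xk) (subset_trans (ell_le (ltW cltx)) sub).
by rewrite -(covers_join c1x c2x) 1?eq_sym // leUx !le_y.
Qed.

Lemma rank_level_ell_subset (i : int) x y :
  x \in rank_level i -> y \in rank_level i -> ell x \subset ell y -> x = y.
Proof.
rewrite !inE => /eqP rx /eqP ry /ell_subset_le xy.
by apply: (eq_of_le_rank xy); apply/eqP; rewrite -eqz_nat rx ry.
Qed.

End LatticeFacts.

Section Monomials.
Context {disp : Order.disp_t} {L : finTBDistrLatticeType disp}.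
Local Notation V := (PT L + PT L)%type.
Local Notation n := (nvars L).
Local Open Scope ring_scope.

Definition u_ind (q : L) (z : V) : bool :=
  match z with inl r => val r \in ell q | inr r => val r \notin ell q end.

Definition u_exp (q : L) : 'X_{1..n} := [multinom u_ind q (enum_val j) | j < n].

Lemma u_expE q z : u_exp q (enum_rank z) = u_ind q z.
Proof. by rewrite mnmE enum_rankK. Qed.

Lemma u_monE (K : fieldType) q : u_mon L K q = 'X_[u_exp q].
Proof.
rewrite mpolyXE_id (eq_bigr (fun j => 'X_(enum_rank (enum_val j)) ^+ u_ind q (enum_val j)));
  last by move=> j _; rewrite enum_valK mnmE.
rewrite -(big_enum_val (fun z : V => 'X_(enum_rank z) ^+ u_ind q z)) big_sumType.
rewrite /u_mon /xvar /yvar [X in X * _ = _]big_mkcond [X in _ * X = _]big_mkcond.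
by congr (_ * _); apply: eq_bigr => r _ /=; case: ifP; rewrite ?expr1 ?expr0.
Qed.

Lemma mdeg_u_exp q : mdeg (u_exp q) = #|{: PT L}|.
Proof.
rewrite mdegE (eq_bigr (fun j => nat_of_bool (u_ind q (enum_val j)))); last first.
  by move=> j _; rewrite mnmE.
rewrite -(big_enum_val (fun z : V => nat_of_bool (u_ind q z))) big_sumType.
by rewrite /= -big_split -sum1_card; apply: eq_bigr => r _ /=; case: (_ \in _).
Qed.

Lemma u_exp_le_ell_comparable p q m :
  (u_exp q <= u_exp p + m)%MM -> (mdeg m <= 1)%N ->
  (ell p \subset ell q) || (ell q \subset ell p).
Proof.
move=> /mnm_lepP le_qpm deg_m; apply/norP=> -[/subsetPn[r1 r1p r1q] /subsetPn[r2 r2q r2p]].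
have jirr_ell x r : r \in ell x -> r \in (jirr : {set L}) by rewrite inE => /andP[].
pose j1 := enum_rank (inr (Sub r1 (jirr_ell _ _ r1p)) : V).
pose j2 := enum_rank (inl (Sub r2 (jirr_ell _ _ r2q)) : V).
have m_j1 : (0 < m j1)%N.
  by have := le_qpm j1; rewrite mnmDE !u_expE /= r1p r1q.
have m_j2 : (0 < m j2)%N.
  by have := le_qpm j2; rewrite mnmDE !u_expE /= r2q (negbTE r2p).
have j12 : j1 != j2 by apply/negP=> /eqP/enum_rank_inj.
move: deg_m; rewrite mdegE (bigD1 j1) //= (bigD1 j2) 1?eq_sym //=; lia.
Qed.

Lemma rank_level_u_exp_le (i : int) p q m :
  p \in rank_level i -> q \in rank_level i ->
  (u_exp q <= u_exp p + m)%MM -> (mdeg m <= 1)%N -> p = q.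
Proof.
move=> pS qS le_qpm /(u_exp_le_ell_comparable le_qpm) /orP[].
  exact: rank_level_ell_subset pS qS.
by move/(rank_level_ell_subset qS pS).
Qed.

Lemma rank_level_u_exp_inj (i : int) : {in rank_level i &, injective u_exp}.
Proof.
move=> p q pS qS e; apply: (rank_level_u_exp_le (m := 0%MM) pS qS); last by rewrite mdeg0.
by rewrite addm0 e lepm_refl.
Qed.

End Monomials.

Lemma sumr_neq0_exists (V : nmodType) (I : finType) (P : pred I) (F : I -> V) :
  (\sum_(x | P x) F x != 0)%R -> exists2 x, P x & (F x != 0)%R.
Proof.
move=> sum_nz; have [x /andP[]|F0] := pickP [pred x | P x && (F x != 0)%R].
  by exists x.
by move: sum_nz; rewrite big1 ?eqxx // => x Px; have := F0 x; rewrite /= Px => /negbFE/eqP.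
Qed.

Section MPolyCoef.
Local Open Scope ring_scope.
Context {n : nat} {R : ringType}.
Implicit Types (f h : {mpoly R[n]}) (k m M : 'X_{1..n}).

Lemma eq_lepm_mdeg m M : (m <= M)%MM -> mdeg m = mdeg M -> m = M.
Proof.
move=> mM deg_mM; have := congr1 mdeg (submK mM); rewrite mdegD deg_mM.
rewrite -{2}[mdeg M]add0n => /addIn/eqP; rewrite mdeg_eq0 => /eqP M_m0.
by rewrite -(submK mM) M_m0 add0m.
Qed.

Lemma mcoeffMX_le f m M :
  (f * 'X_[m])@_M = if (m <= M)%MM then f@_(M - m) else 0.
Proof.
case: ifP => [mM|mNM]; first by rewrite -{1}(submK mM) addmC mcoeffMX.
apply/eqP; apply: contraFT mNM; rewrite -mcoeff_msupp (perm_mem (msuppMX f m)).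
by case/mapP=> k _ ->; apply: lem_addr.
Qed.

Lemma mcoeffM_neq0 f h M : (f * h)@_M != 0 ->
  exists k1 k2, [/\ M = (k1 + k2)%MM, f@_k1 != 0 & h@_k2 != 0].
Proof.
rewrite mcoeffM => /sumr_neq0_exists[k /eqP M_k fh_k].
exists k.1, k.2; split=> //; apply: contraNneq fh_k => ->; by rewrite (mul0r, mulr0).
Qed.

Lemma homog_deg_mcoeff0 (K : fieldType) d (f : {mpoly K[n]}) m :
  homog_deg d f -> mdeg m != d -> f@_m = 0.
Proof.
move=> /allP f_d; apply: contraNeq => fm_nz; apply: f_d.
by rewrite mcoeff_msupp.
Qed.

End MPolyCoef.

Section Ideal.
Local Open Scope ring_scope.
Context {K : fieldType} {disp : Order.disp_t} {L : finTBDistrLatticeType disp}.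
Local Notation u q := (u_mon L K q).
Local Notation N := #|{: PT L}|.

Lemma u_mon_H_ideal (S : {set L}) q : q \in S -> H_ideal L K S (u q).
Proof.
move=> qS; exists (fun x => (x == q)%:R).
rewrite (bigD1 q) //= eqxx mul1r big1 ?addr0 // => x /andP[_ /negbTE->].
by rewrite mul0r.
Qed.

Lemma H_ideal_mcoeff_neq0 (S : {set L}) f M :
  H_ideal L K S f -> f@_M != 0 -> exists2 q, q \in S & (u_exp q <= M)%MM.
Proof.
case=> c ->; rewrite raddf_sum => /sumr_neq0_exists[q qS].
by rewrite /= u_monE mcoeffMX_le; case: ifP; rewrite ?eqxx //; exists q.
Qed.

Variable i : int.
Local Notation S := (rank_level i : {set L}).

Lemma mcoeff_sum_u_shift (c : L -> {mpoly K[nvars L]}) p m :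
  p \in S -> (mdeg m <= 1)%N ->
  (\sum_(q in S) c q * u q)@_(u_exp p + m) = (c p)@_m.
Proof.
move=> pS deg_m; rewrite raddf_sum (bigD1 p) //= u_monE mcoeffMX_le lem_addr.
have -> : (u_exp p + m - u_exp p = m)%MM by rewrite addmC addmK.
rewrite big1 ?addr0 // => q /andP[qS qp].
rewrite u_monE mcoeffMX_le; case: ifP => // le_qpm.
by rewrite (rank_level_u_exp_le pS qS le_qpm deg_m) eqxx in qp.
Qed.

Lemma H_ideal_homogE f : H_ideal L K S f -> homog_deg N f ->
  f = \sum_(q in S) (f@_(u_exp q))%:MP * u q.
Proof.
move=> fH f_N; apply/mpolyP=> M; rewrite raddf_sum /=.
under eq_bigr => q _ do rewrite mcoeffCM u_monE mcoeffX.
have [p /andP[pS /eqP<-]|noS] := pickP [pred p | (p \in S) && (u_exp p == M)].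
  rewrite (bigD1 p) //= eqxx mulr1 big1 ?addr0 // => q /andP[qS qp].
  case: eqP => [/(rank_level_u_exp_inj qS pS) qpE|]; last by rewrite mulr0.
  by rewrite qpE eqxx in qp.
rewrite big1 => [|q qS]; last by have := noS q; rewrite /= qS /= => ->; rewrite mulr0.
apply/eqP; apply: contraT => fM_nz.
have deg_M : mdeg M = N.
  by apply/eqP; apply: contraNT fM_nz => /(homog_deg_mcoeff0 f_N)->; rewrite eqxx.
have [q qS le_qM] := H_ideal_mcoeff_neq0 fH fM_nz.
by have := noS q; rewrite /= qS (eq_lepm_mdeg le_qM) ?eqxx // mdeg_u_exp.
Qed.

End Ideal.

Section Resolution.
Local Open Scope ring_scope.
Context {K : fieldType} {disp : Order.disp_t} {L : finTBDistrLatticeType disp} (i : int).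
Local Notation R := {mpoly K[nvars L]}.
Local Notation u q := (u_mon L K q).
Local Notation S := (rank_level i : {set L}).
Local Notation N := #|{: PT L}|.

Variables (d b b1 : nat) (g : 'cV[R]_b) (A : 'M[R]_(b1, b)).
Hypothesis g_homog : forall j, homog_deg d (g j ord0).
Hypothesis A_linear : forall l j, homog_deg 1 (A l j).
Hypothesis g_gen : forall f, H_ideal L K S f <-> exists v : 'rV_b, f = (v *m g) ord0 ord0.
Hypothesis A_syz : forall v : 'rV_b, v *m g = 0 <-> exists w, v = w *m A.

Lemma g_H_ideal j : H_ideal L K S (g j ord0).
Proof. by apply/g_gen; exists (delta_mx 0 j); rewrite -rowE mxE. Qed.

Definition ucoef_col (x : L) : 'cV[R]_b := \col_j ((g j ord0)@_(u_exp x))%:MP.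

Variables p q : L.
Hypotheses (pS : p \in S) (qS : q \in S) (pq : p != q).

Lemma gen_deg : d = N.
Proof.
have [a up] := (g_gen (u p)).1 (u_mon_H_ideal pS).
have : (u p)@_(u_exp p) != 0 by rewrite u_monE mcoeffX eqxx oner_eq0.
rewrite up mxE raddf_sum => /sumr_neq0_exists[j _ /mcoeffM_neq0[k1 [k2 [pk _ gk2]]]].
have deg_k2 : mdeg k2 = d.
  by apply/eqP; apply: contraNT gk2 => /(homog_deg_mcoeff0 (g_homog j))->; rewrite eqxx.
have [x _ le_xk2] := H_ideal_mcoeff_neq0 (g_H_ideal j) gk2.
have := lemc_mdeg (lem_leo le_xk2); have := congr1 mdeg pk.
by rewrite mdegD !mdeg_u_exp deg_k2; lia.
Qed.

Lemma g_decomp : g = \sum_(x in S) u x *: ucoef_col x.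
Proof.
apply/matrixP=> j k; rewrite fintype.ord1 summxE.
rewrite {1}(H_ideal_homogE (g_H_ideal j)) -?gen_deg //.
by apply: eq_bigr => x _; rewrite !mxE mulrC.
Qed.

Lemma mcoeff_mulmx_g (a : 'rV_b) x m : x \in S -> (mdeg m <= 1)%N ->
  ((a *m g) ord0 ord0)@_(u_exp x + m) = ((a *m ucoef_col x) ord0 ord0)@_m.
Proof.
move=> xS deg_m; rewrite g_decomp mulmx_sumr summxE.
under eq_bigr => y _ do rewrite -scalemxAr mxE mulrC.
exact: mcoeff_sum_u_shift.
Qed.

Lemma syz_ucoef_col x : x \in S -> A *m ucoef_col x = 0.
Proof.
move=> xS; apply/matrixP=> l k; rewrite fintype.ord1 [RHS]mxE.
transitivity ((row l A *m ucoef_col x) ord0 ord0); first by rewrite -row_mul [RHS]mxE.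
apply/mpolyP=> m; rewrite mcoeff0.
have [deg_m|deg_m] := eqVneq (mdeg m) 1%N.
  rewrite -mcoeff_mulmx_g ?deg_m //.
  suff -> : row l A *m g = 0 by rewrite mxE mcoeff0.
  by apply/A_syz; exists (delta_mx 0 l); rewrite rowE.
rewrite mxE raddf_sum big1 // => j _.
by rewrite !mxE mulrC /= mcoeffCM (homog_deg_mcoeff0 (A_linear l j)) ?mulr0.
Qed.

Lemma ker_ucoef_col (v : 'rV_b) x : x \in S -> v *m g = 0 -> v *m ucoef_col x = 0.
Proof. by move=> xS /A_syz[w ->]; rewrite -mulmxA syz_ucoef_col // mulmx0. Qed.

Lemma koszul_syz (a1 a2 : 'rV_b) : (a1 *m g) ord0 ord0 = u p -> (a2 *m g) ord0 ord0 = u q ->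
  (u q *: a1 - u p *: a2) *m g = 0.
Proof.
rewrite !mxE => a1g a2g; apply/matrixP=> j k; rewrite !fintype.ord1 mulmxBl -!scalemxAl.
by rewrite !mxE a1g a2g mulrC subrr.
Qed.

Lemma linear_resolution_absurd : False.
Proof.
have [a1 a1g] := (g_gen (u p)).1 (u_mon_H_ideal pS).
have [a2 a2g] := (g_gen (u q)).1 (u_mon_H_ideal qS).
have a1_p : ((a1 *m ucoef_col p) ord0 ord0)@_0 = 1.
  by rewrite -mcoeff_mulmx_g ?mdeg0 // addm0 -a1g u_monE mcoeffX eqxx.
have pNq : ~~ (u_exp p <= u_exp q + 0)%MM.
  apply: contra pq => le_pq; apply/eqP/esym.
  by apply: (rank_level_u_exp_le qS pS le_pq); rewrite mdeg0.
have := ker_ucoef_col pS (koszul_syz (esym a1g) (esym a2g)).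
rewrite mulmxBl -!scalemxAl; move: a1_p.
move: (a1 *m ucoef_col p) (a2 *m ucoef_col p) => c1 c2 c1_p.
move/matrixP/(_ ord0 ord0)/(congr1 (mcoeff (u_exp q + 0)%MM)).
rewrite !mxE mcoeffB mcoeff0 !u_monE !(mulrC 'X_[_]).
by rewrite mcoeffMX c1_p mcoeffMX_le (negbTE pNq) subr0 => /eqP; rewrite oner_eq0.
Qed.

End Resolution.

Theorem corollary3p15 (K : fieldType) (disp : Order.disp_t)
    (L : finTBDistrLatticeType disp) (i : int) :
  (1 < #|(rank_level i : {set L})|)%N ->
  ~ has_linear_resolution (H_ideal L K (rank_level i : {set L})).
Proof.
move=> /card_gt1P[p [q [pS qS pq]]] [d [b [g [A [g_homog A_linear g_gen A_syz _]]]]].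
exact: (linear_resolution_absurd g_homog (A_linear 0%N) g_gen A_syz pS qS pq).
Qed.
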